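(* Let $2\le m\le n$ be natural numbers with $n-m=k(m-1)$ for a natural number $k$, and let $l$ be a positive integer with $l\equiv m\pmod{m-1}$. Let $P\subset a_{m-1}\{a_0,\dots,a_{m-1}\}^*$ be an $l$-element set such that $\{w: a_{m-1}w\in P\}$ is a complete prefix code over the alphabet $\{a_0,\dots,a_{m-1}\}$, with its elements listed as $p_l<_{dict}p_{l-1}<_{dict}\dots<_{dict}p_1$, and let $1\le i\le l$. Then the successors $(p_i)'_1,\dots,(p_i)'_k$ (with respect to $P$) are well defined. Moreover, letting $\widetilde{P}=(P\setminus\{p_i\})\cup\{p_ia_0,\dots,p_ia_{m-1}\}$, the successors with respect to $\widetilde{P}$ of the new elements are: for $1\le j\le m-1$ and $1\le r\le k$, $$(p_ia_j)'_r=p_i\,a_{m+(m-1-j)k+r-1},$$ (so $(p_ia_{m-1})'_1=p_ia_m,\dots,(p_ia_{m-1})'_k=p_ia_{m+k-1}$, $(p_ia_{m-2})'_1=p_ia_{m+k}$, ..., $(p_ia_1)'_k=p_ia_{n-1}$), and for $1\le r\le k$, $$(p_ia_0)'_r=(p_i)'_r,$$ where the right-hand side is the $r$-th successor of $p_i$ with respect to $P$.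
   Context: Let $\mathcal{A}_n=\{a_0,a_1,\dots,a_{n-1}\}$ be an alphabet of $n$ distinct letters with linear order $a_0<a_1<\dots<a_{n-1}$, containing $\mathcal{A}_m=\{a_0,\dots,a_{m-1}\}$, and let $\mathcal{A}_{m,n}=\{a_m,\dots,a_{n-1}\}$. Words are finite strings of letters (including the empty word $\varepsilon$), and juxtaposition denotes concatenation. $u<_{pref}v$ means $v=uw$ for a nonempty word $w$. Dictionary order: $u\le_{dict}v$ iff $u$ is a prefix of $v$, or $u=p\alpha s$, $v=p\beta t$ with letters $\alpha<\beta$. For a finite set $P$ of words, $\operatorname{spref}(P)=\{w: \exists p\in P,\ w<_{pref}p\}$ (strict prefixes, including $\varepsilon$), and $\operatorname{spref}(P)\mathcal{A}_{m,n}=\{xa_j: x\in\operatorname{spref}(P),\ a_j\in\mathcal{A}_{m,n}\}$. Successors: let $P\subset a_{m-1}\{a_0,\dots,a_{m-1}\}^*$ be as in the claim, with elements $p_1,\dots,p_l$ listed in reverse dictionary order ($p_1$ the largest). The successors $(p_s)'_r$ ($1\le s\le l$, $1\le r\le k$) are defined inductively in the order $(p_1)'_1,\dots,(p_1)'_k,(p_2)'_1,\dots,(p_2)'_k,\dots,(p_l)'_k$: writing $P_{s,r-1}$ for the set of all successors already defined before $(p_s)'_r$ in this order, $$(p_s)'_r=\min{}_{\le_{dict}}\{xa_j\in\operatorname{spref}(P)\mathcal{A}_{m,n}:\ p_s<_{dict}xa_j,\ xa_j\notin P_{s,r-1}\}.$$ ''Well defined'' means the set over which the minimum is taken is nonempty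 at each step. Successors with respect to $\widetilde{P}$ are defined the same way with $\widetilde{P}$ (listed in its own reverse dictionary order) in place of $P$. *)

(* Words over the alphabet {a_0,...,a_{n-1}} are encoded as
   sequences of natural numbers: the letter a_j is the number j. *)
From mathcomp Require Import all_boot.
Set Implicit Arguments. Unset Strict Implicit. Unset Printing Implicit Defensive.

Definition word := seq nat.

Definition strict_prefix (u v : word) : Prop := exists w, w <> [::] /\ v = u ++ w.

Definition dict_le (u v : word) : Prop :=
  (exists w, v = u ++ w) \/
  (exists (p : word) (a b : nat) (s t : word),
      (a < b)%N /\ u = p ++ a :: s /\ v = p ++ b :: t).

Definition dict_lt (u v : word) : Prop := dict_le u v /\ u <> v.

(* the finite set P is given by the list ps = [p_1; ...; p_l] of its
   elements in reverse dictionary order (p_1 largest) *)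
Definition rev_dict_sorted (ps : seq word) : Prop :=
  forall s, s.+1 < size ps -> dict_lt (nth [::] ps s.+1) (nth [::] ps s).

Definition spref (ps : seq word) (x : word) : Prop :=
  exists2 p, p \in ps & strict_prefix x p.

Definition cand (m n : nat) (ps : seq word) (w : word) : Prop :=
  exists (x : word) (j : nat), spref ps x /\ m <= j < n /\ w = rcons x j.

Definition is_dict_min (S : word -> Prop) (w : word) : Prop :=
  S w /\ forall v, S v -> dict_le w v.

(* L = [(p_1)'_1; ...; (p_1)'_k; (p_2)'_1; ...] is an initial segment of the
   sequence of successors (w.r.t. ps, parameters m n k): its t-th entry
   (t = (s-1) k + (r-1), 0-based) is (p_s)'_r, the dict-minimum of the
   elements x a_j of spref(P)A_{m,n} with p_s <_dict x a_j that are not among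
   the previously defined successors (the first t entries of L). *)
Definition succ_list (m n k : nat) (ps : seq word) (L : seq word) : Prop :=
  size L <= size ps * k /\
  forall t, t < size L ->
    is_dict_min
      (fun w => cand m n ps w /\ dict_lt (nth [::] ps (t %/ k)) w
                /\ ~ (w \in take t L))
      (nth [::] L t).

(* succ_at m n k ps s r w : the successor (p_{s+1})'_r (0-based position s
   in ps, 1 <= r <= k) is well defined (all successors up to it are) and
   equals w. *)
Definition succ_at (m n k : nat) (ps : seq word) (s r : nat) (w : word) : Prop :=
  exists L, succ_list m n k ps L /\ s * k + r.-1 < size L /\
            nth [::] L (s * k + r.-1) = w.

Definition prefix_code (C : word -> Prop) : Prop :=
  forall u v, C u -> C v -> (exists w, v = u ++ w) -> u = v.

Definition complete_prefix_code (m : nat) (C : word -> Prop) : Prop :=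
  (forall c, C c -> all (fun a => a < m) c) /\
  prefix_code C /\
  forall w : word, all (fun a => a < m) w ->
    exists c, C c /\ ((exists u, w = c ++ u) \/ (exists u, c = w ++ u)).

(* Successors are chosen greedily, and a candidate x a_j (j >= m) never extends an element
   of P, so comparing it with p_i a_b amounts to comparing it with p_i.  Hence in the refined
   list the successors of p_1, ..., p_(i-1) do not change, the new candidates
   p_i a_m < ... < p_i a_(n-1) are consumed k at a time by p_i a_(m-1), ..., p_i a_1, and then
   p_i a_0 faces exactly the choices p_i faced.  The successors exist by counting: consecutive
   elements branch as c b u < c b' u' with b < b', and the block c a_(m+(b'-1)k), ...,
   c a_(m+b'k-1) provides k candidates above c b u that are not counted before. *)

From mathcomp Require Import all_boot all_order zify.
From Stdlib Require Import Classical.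
Set Implicit Arguments. Unset Strict Implicit. Unset Printing Implicit Defensive.
Import Order.TTheory.

Local Notation "u <=lex v" := (@Order.le _ (seqlexi nat) u v) (at level 70, no associativity).
Local Notation "u <lex v" := (@Order.lt _ (seqlexi nat) u v) (at level 70, no associativity).
Local Notation gtlex := (@Order.gt _ (seqlexi nat)).

Lemma lexi_prefix (u v : word) : prefix u v -> u <=lex v.
Proof. by case/prefixP=> w ->; elim: u => //= a u IH; rewrite lexi_cons lexx IH. Qed.

Lemma ltxi_cat (p : word) a b s t : a < b -> p ++ a :: s <lex p ++ b :: t.
Proof.
move=> ab; elim: p => /= [|c p IH]; last by rewrite ltxi_cons lexx.
by rewrite ltxi_cons !leEnat (ltnW ab) leqNgt ab.
Qed.

Lemma lexi_rcons (p : word) a b : a <= b -> rcons p a <=lex rcons p b.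
Proof.
rewrite leq_eqVlt => /predU1P[->//|ab].
by rewrite -!cats1 ltW // ltxi_cat.
Qed.

Lemma prefix_rcons_cat (c u : word) b : prefix (rcons c b) (c ++ b :: u).
Proof. by rewrite -cats1 prefix_catr // eqxx /= eqxx prefix0s. Qed.

Lemma dict_leP u v : reflect (dict_le u v) (u <=lex v).
Proof.
apply: (iffP idP) => [|[[w ->]|[p [a [b [s [t [ab [-> ->]]]]]]]]]; last first.
- exact/ltW/ltxi_cat.
- exact/lexi_prefix/prefix_prefix.
elim: u v => [|a u IH] v; first by left; exists v.
case: v => [|b v]; first by rewrite lexis0.
rewrite lexi_cons !leEnat; case: ltngtP => //= [ab _|<- /IH].
  by right; exists [::], a, b, u, v.
case=> [[w ->]|[p [c [d [s [t [cd [-> ->]]]]]]]]; first by left; exists w.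
by right; exists (a :: p), c, d, s, t.
Qed.

Lemma dict_ltP u v : reflect (dict_lt u v) (u <lex v).
Proof.
rewrite lt_def eq_sym; apply: (iffP andP) => [[/eqP uv /dict_leP]|[/dict_leP -> /eqP]] //.
Qed.

Lemma gtlex_trans : transitive gtlex.
Proof. by move=> v u w uv vw; apply: lt_trans vw uv. Qed.

Lemma rev_dict_sortedP s : rev_dict_sorted s <-> sorted gtlex s.
Proof.
by split=> [h|/(sortedP [::]) h i /h/dict_ltP//]; apply/(sortedP [::]) => i /h/dict_ltP.
Qed.

Lemma ltxi_catl_nprefix (x y z : word) : y <lex x -> ~~ prefix y x -> y ++ z <lex x.
Proof.
elim: y x => [|a y IH] [|b x] //=; rewrite !ltxi_cons.
case: eqVneq => [<- /andP[_ /implyP yx] /= /(IH _ (yx (lexx a)))->|neq /andP[ab _] _].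
  by rewrite lexx.
by rewrite ab /=; apply/implyP => ba; case/eqP: neq; apply: le_anti; rewrite ab ba.
Qed.

Lemma ltxi_cat_nprefix (u v z : word) : ~~ prefix u v -> (u ++ z <lex v) = (u <lex v).
Proof.
move=> uv; case: (@ltgtP _ (seqlexi nat) u v) => [lt|gt|eq].
- exact: ltxi_catl_nprefix.
- by apply/negbTE; rewrite -leNgt; apply: le_trans (ltW gt) (lexi_prefix (prefix_prefix _ _)).
- by rewrite eq prefix_refl in uv.
Qed.

Lemma ex_minimum d (T : orderType d) (S : T -> Prop) (s : seq T) :
  (forall x, S x -> x \in s) -> (exists x, S x) ->
  exists2 x, S x & forall y, S y -> (x <= y)%O.
Proof.
elim: s S => [|a s IH] S Ss [x Sx]; first by have := Ss _ Sx.
pose S' y := S y /\ y <> a.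
have [[y S'y]|noS'] := classic (exists y, S' y).
- have S's v : S' v -> v \in s.
    by case=> Sv va; move: (Ss v Sv); rewrite inE => /predU1P[|].
  have [z [Sz za] zmin] := IH S' S's (ex_intro _ y S'y).
  have [[Sa az]|not_a] := classic (S a /\ (a <= z)%O).
    exists a => // w Sw; have [->//|wa] := classic (w = a).
    exact: le_trans az (zmin _ (conj Sw wa)).
  exists z => // w Sw; have [wa|wa] := classic (w = a); last exact: zmin.
  by subst w; rewrite leNgt; apply/negP => az; exact: not_a (conj Sw (ltW az)).
- have Sa : S a by have [<-//|xa] := classic (x = a); case: noS'; exists x.
  exists a => // w Sw; have [->//|wa] := classic (w = a).
  by case: noS'; exists w.
Qed.

Lemma is_dict_min_uniq S w1 w2 : is_dict_min S w1 -> is_dict_min S w2 -> w1 = w2.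
Proof.
by case=> S1 min1 [S2 min2]; apply: (@le_anti _ (seqlexi nat)); apply/andP; split; apply/dict_leP; auto.
Qed.

Lemma ex_dict_min (S : word -> Prop) (s : seq word) :
  (forall w, S w -> w \in s) -> (exists w, S w) -> exists w, is_dict_min S w.
Proof.
move=> Ss exS; have [w Sw wmin] := @ex_minimum _ (seqlexi nat) S s Ss exS.
by exists w; split=> // v /wmin/dict_leP.
Qed.

Definition cands_seq (n : nat) (ps : seq word) : seq word :=
  [seq rcons x j | x <- flatten [seq [seq take d p | d <- iota 0 (size p)] | p <- ps],
                   j <- iota 0 n].

Lemma cands_seqP m n ps w : cand m n ps w -> w \in cands_seq n ps.
Proof.
case=> x [j [[p pps [z [zn pE]]] [/andP[_ jn] ->]]]; subst p.
apply: allpairs_f; last by rewrite mem_iota.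
apply/flatten_mapP; exists (x ++ z) => //; apply/mapP; exists (size x).
- by rewrite mem_iota size_cat; case: z zn {pps} => // a z' _ /=; lia.
- by rewrite take_size_cat.
Qed.

Definition succ_cands (m n k : nat) (ps L : seq word) (t : nat) (w : word) : Prop :=
  cand m n ps w /\ dict_lt (nth [::] ps (t %/ k)) w /\ ~ (w \in take t L).

Lemma succ_list_take m n k ps L1 L2 :
  succ_list m n k ps L1 -> succ_list m n k ps L2 ->
  forall t, t <= size L1 -> t <= size L2 -> take t L1 = take t L2.
Proof.
case=> _ min1 [_ min2]; elim=> [|t IH] t1 t2; first by rewrite !take0.
rewrite (take_nth [::] t1) (take_nth [::] t2) IH ?(ltnW t1) ?(ltnW t2) //.
congr rcons; apply: is_dict_min_uniq (min1 t t1) _.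
by rewrite (IH (ltnW t1) (ltnW t2)); apply: min2.
Qed.

Lemma succ_list_nth m n k ps L1 L2 t :
  succ_list m n k ps L1 -> succ_list m n k ps L2 ->
  t < size L1 -> t < size L2 -> nth [::] L1 t = nth [::] L2 t.
Proof.
move=> sL1 sL2 t1 t2; have := succ_list_take sL1 sL2 t1 t2.
by rewrite (take_nth [::] t1) (take_nth [::] t2) => /rcons_inj [].
Qed.

Lemma succ_atE m n k ps L s r w :
  succ_list m n k ps L -> s * k + r.-1 < size L ->
  succ_at m n k ps s r w -> w = nth [::] L (s * k + r.-1).
Proof. by move=> sL lt [L0 [sL0 [lt0 <-]]]; apply: succ_list_nth sL0 sL lt0 lt. Qed.

Section SortedPrefixFreeListing.
Variables (m n : nat) (ps : seq word).
Hypothesis m_gt1 : 1 < m.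
Hypothesis ps_shape :
  forall p, p \in ps -> exists w, p = (m - 1) :: w /\ all (fun a => a < m) w.
Hypothesis ps_prefix_free : {in ps &, forall p q, prefix p q -> p = q}.
Hypothesis ps_sorted : sorted gtlex ps.

Lemma ps_letters p : p \in ps -> all (fun a => a < m) p.
Proof. by case/ps_shape=> w [-> wm] /=; rewrite wm andbT; lia. Qed.

Lemma ps_uniq : uniq ps.
Proof. exact: sorted_uniq gtlex_trans ltxx _ ps_sorted. Qed.

Lemma nth_ps_ltn s s' : s < s' < size ps -> nth [::] ps s' <lex nth [::] ps s.
Proof.
case/andP=> ss' s'ps; apply: (sorted_ltn_nth gtlex_trans) => //; rewrite inE.
exact: ltn_trans s'ps.
Qed.

Lemma cand_nprefix v p : cand m n ps v -> p \in ps -> ~~ prefix p v.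
Proof.
case=> x [j [[q qps [w [wn qE]]] [/andP[mj _] ->]]] pps; apply/negP => pv.
have [px|xp] := leqP (size p) (size x).
- have pq : prefix p q.
    by rewrite qE; apply: prefix_catl; move: pv; rewrite !prefixE -cats1 takel_cat.
  move: px; rewrite (ps_prefix_free pps qps pq) qE size_cat.
  by rewrite -{2}[size x]addn0 leq_add2l leqn0 size_eq0 => /eqP.
- move: pv; rewrite prefixE take_oversize ?size_rcons // => /eqP pE.
  by move: (ps_letters pps); rewrite -pE all_rcons => /andP[jm _]; lia.
Qed.

Lemma nth_ps_branch s : s.+1 < size ps ->
  exists c b b' u u', [/\ b < b', nth [::] ps s.+1 = c ++ b :: u,
                          nth [::] ps s = c ++ b' :: u' & c != [::]].
Proof.
move=> s1ps; have s_ps : s < size ps by exact: ltnW.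
have /dict_ltP[[[w pE]|[c [b [b' [u [u' [bb' [E1 E2]]]]]]]] neq] :=
  nth_ps_ltn (s := s) (s' := s.+1) (introT andP (conj (ltnSn s) s1ps)).
  by case: neq; apply: ps_prefix_free; rewrite ?mem_nth ?pE ?prefix_prefix.
exists c, b, b', u, u'; split=> //; apply/eqP => c0; subst c.
have [w1 [+ _]] := ps_shape (mem_nth [::] s1ps).
have [w2 [+ _]] := ps_shape (mem_nth [::] s_ps).
by rewrite E1 E2 => -[<- _] [b'E _]; move: bb'; rewrite b'E ltnn.
Qed.

Lemma ps_letter_lt c a u : c ++ a :: u \in ps -> a < m.
Proof. by move/ps_letters; rewrite all_cat /= => /and3P[]. Qed.

Section Refinement.
Variable i0 : nat.
Hypothesis i0_ps : i0 < size ps.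
Local Notation pi := (nth [::] ps i0).

Definition ptilde : seq word :=
  take i0 ps ++ [seq rcons pi j | j <- rev (iota 0 m)] ++ drop i0.+1 ps.

Lemma pi_ps : pi \in ps.
Proof. exact: mem_nth. Qed.

Lemma ps_split : ps = take i0 ps ++ pi :: drop i0.+1 ps.
Proof. by rewrite -drop_nth // cat_take_drop. Qed.

Lemma ptilde_sorted : sorted gtlex ptilde.
Proof.
rewrite sorted_pairwise; last exact: gtlex_trans.
have := ps_sorted; rewrite sorted_pairwise; last exact: gtlex_trans.
rewrite {1}ps_split pairwise_cat pairwise_cons => /and3P[/allrelP before p1 /andP[/allP after p2]].
rewrite /ptilde !pairwise_cat p1 p2 /= !andbT; apply/and3P; split.
- apply/allrelP => x y x_in; rewrite mem_cat => /orP[/mapP[j _ ->]|y_in].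
    have pi_x : pi <lex x by apply: before; rewrite ?inE ?eqxx.
    rewrite /= -cats1 ltxi_cat_nprefix //; apply/negP.
    by move=> /(ps_prefix_free pi_ps (mem_take x_in)) pix; rewrite pix ltxx in pi_x.
  by apply: before; rewrite ?inE ?y_in ?orbT.
- apply/allrelP => x y /mapP[j _ ->] y_in.
  by apply: lt_le_trans (after _ y_in) _; rewrite lexi_prefix // prefix_rcons.
- rewrite -sorted_pairwise ?sorted_map ?rev_sorted; last exact: gtlex_trans.
  apply: sub_sorted (iota_ltn_sorted 0 m) => a b ab /=.
  by rewrite -!cats1 ltxi_cat.
Qed.

Lemma mem_ptilde w :
  w \in ptilde <-> (w \in ps /\ w <> pi) \/ exists j, j < m /\ w = rcons pi j.
Proof.
have := ps_uniq; rewrite {1}ps_split cat_uniq /= => /and4P[_ /norP[pi_take _] pi_drop _].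
rewrite /ptilde !mem_cat; split.
- case/or3P => [w_in|/mapP[j j_in ->]|w_in].
  + by left; split; [exact: mem_take w_in|by move=> wpi; rewrite -wpi w_in in pi_take].
  + by right; exists j; split=> //; move: j_in; rewrite mem_rev mem_iota.
  + by left; split; [exact: mem_drop w_in|by move=> wpi; rewrite -wpi w_in in pi_drop].
- case=> [[w_in wpi]|[j [jm ->]]].
    move: w_in; rewrite {1}ps_split mem_cat inE => /or3P[->//|/eqP//|->].
    by rewrite !orbT.
  by rewrite map_f ?orbT // mem_rev mem_iota.
Qed.

Lemma ptildeE ps' :
  (forall w, w \in ps' <-> (w \in ps /\ w <> pi) \/ exists j, j < m /\ w = rcons pi j) ->
  sorted gtlex ps' -> ps' = ptilde.
Proof.
move=> ps'_mem ps'_sorted.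
apply: (irr_sorted_eq gtlex_trans ltxx ps'_sorted ptilde_sorted) => w.
by apply/idP/idP => [/ps'_mem/mem_ptilde|/mem_ptilde/ps'_mem].
Qed.

Lemma size_ptilde : size ptilde = size ps + m - 1.
Proof.
rewrite /ptilde !size_cat size_map size_rev size_iota size_takel ?(ltnW i0_ps) // size_drop.
lia.
Qed.

Lemma nth_ptilde_lo s : s < i0 -> nth [::] ptilde s = nth [::] ps s.
Proof. by move=> s_i0; rewrite nth_cat size_takel ?(ltnW i0_ps) // s_i0 nth_take. Qed.

Lemma nth_ptilde_mid u : u < m -> nth [::] ptilde (i0 + u) = rcons pi (m - 1 - u).
Proof.
move=> um; rewrite nth_cat size_takel ?(ltnW i0_ps) // ltnNge leq_addr /= addKn.
rewrite nth_cat size_map size_rev size_iota um (nth_map 0) ?size_rev ?size_iota //.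
by rewrite nth_rev ?size_iota // nth_iota; [congr rcons|]; lia.
Qed.

Lemma index_ptilde j : j < m -> index (rcons pi j) ptilde = i0 + (m - 1 - j).
Proof.
move=> jm; have -> : rcons pi j = nth [::] ptilde (i0 + (m - 1 - j)).
  by rewrite nth_ptilde_mid; [congr rcons|]; lia.
apply: index_uniq; first by rewrite size_ptilde; lia.
exact: sorted_uniq gtlex_trans ltxx _ ptilde_sorted.
Qed.

Lemma spref_ptilde x : spref ptilde x <-> spref ps x \/ x = pi.
Proof.
have rcons_pi0 : rcons pi 0 \in ptilde by apply/mem_ptilde; right; exists 0; split=> //; lia.
split.
- case=> q /mem_ptilde[[q_ps _]|[j [_ ->]]] [w [w0 qE]].
    by left; exists q => //; exists w.
  case/lastP: w w0 qE => [//|w a] _; rewrite -rcons_cat => /rcons_inj[piE _].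
  case/lastP: w piE => [|w b piE]; first by rewrite cats0 => ->; right.
  by left; exists pi; [exact: pi_ps|exists (rcons w b); split=> //; case: w {piE}].
- case=> [[q q_ps [w [w0 qE]]]|->]; last by exists (rcons pi 0) => //; exists [:: 0]; rewrite cats1.
  have [qpi|qpi] := eqVneq q pi.
    exists (rcons pi 0) => //; exists (rcons w 0).
    by split; [case: (w)|rewrite -qpi qE rcons_cat].
  by exists q; [apply/mem_ptilde; left; split=> //; apply/eqP|exists w].
Qed.

Lemma cand_ptilde v :
  cand m n ptilde v <-> cand m n ps v \/ exists j, m <= j < n /\ v = rcons pi j.
Proof.
split.
- case=> x [j [/spref_ptilde[x_spref|->] [jmn ->]]]; first by left; exists x, j.
  by right; exists j.
- case=> [[x [j [x_spref [jmn ->]]]]|[j [jmn ->]]].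
    by exists x, j; split=> //; apply/spref_ptilde; left.
  by exists pi, j; split=> //; apply/spref_ptilde; right.
Qed.

End Refinement.

Section Successors.
Variable k : nat.
Hypothesis k_gt0 : 0 < k.
Hypothesis nmk : n - m = k * (m - 1).

Lemma n_eq : n = m + (m - 1) * k.
Proof.
have : 0 < (m - 1) * k by rewrite muln_gt0 k_gt0 subn_gt0 m_gt1.
by rewrite mulnC -nmk; lia.
Qed.

Definition block (c : word) (b : nat) : seq word :=
  [seq rcons c (m + b.-1 * k + r) | r <- iota 0 k].

Lemma block_uniq c b : uniq (block c b).
Proof. by rewrite map_inj_uniq ?iota_uniq // => r r' /rcons_inj[/addnI]. Qed.

Lemma block_inj w c b c' b' : 0 < b -> 0 < b' ->
  w \in block c b -> w \in block c' b' -> c = c' /\ b = b'.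
Proof.
move=> b0 b'0 /mapP[r + ->] /mapP[r' +] /rcons_inj[<- e]; rewrite !mem_iota.
move=> /andP[_ rk] /andP[_ r'k]; split=> //.
have /(congr1 (divn^~ k)) : b.-1 * k + r = b'.-1 * k + r' by lia.
by rewrite !divnMDl // !divn_small // !addn0 => /(congr1 succn); rewrite !prednK.
Qed.

Lemma block_cand c b u w : c ++ b :: u \in ps -> 0 < b ->
  w \in block c b -> cand m n ps w.
Proof.
move=> cps b0 /mapP[r]; rewrite mem_iota => /andP[_ rk] ->.
exists c, (m + b.-1 * k + r); split; last split=> //.
  by exists (c ++ b :: u) => //; exists (b :: u).
have bm := ps_letter_lt cps.
have : b.-1 * k + k <= k * (m - 1).
  by rewrite [k * _]mulnC addnC -mulSn leq_mul2r prednK //; apply/orP; right; lia.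
move: (b.-1 * k) => bk; lia.
Qed.

Lemma block_gt c a u b w : a < m -> w \in block c b -> c ++ a :: u <lex w.
Proof.
by move=> am /mapP[r _ ->]; rewrite -cats1 ltxi_cat // -addnA ltn_addr.
Qed.

Lemma enough_cands s : s < size ps -> exists W : seq word,
  [/\ uniq W, size W = s.+1 * k,
      forall w, w \in W -> cand m n ps w /\ nth [::] ps s <lex w &
      forall w, w \in W -> exists c b, [/\ w \in block c b, 0 < b &
                             c = [::] \/ nth [::] ps s <lex rcons c b]].
(* The last clause keeps the block added at the next branching point disjoint from W. *)
Proof.
elim: s => [|s IH] s_ps.
  have [w0 [p0E w0m]] := ps_shape (mem_nth [::] s_ps).
  have m0 : 0 < m - 1 by lia.
  have p0ps : [::] ++ (m - 1) :: w0 \in ps by rewrite -p0E mem_nth.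
  exists (block [::] (m - 1)); split=> [||w wW|w wW].
  - exact: block_uniq.
  - by rewrite size_map size_iota mul1n.
  - split; first exact: block_cand p0ps m0 wW.
    by rewrite p0E; apply: (block_gt (c := [::])) wW; lia.
  - by exists [::], (m - 1); split=> //; left.
have [W [Wuniq Wsize Wcand Wcharge]] := IH (ltnW s_ps).
have [c [b [b' [u [u' [bb' E1 E2 c0]]]]]] := nth_ps_branch s_ps.
have ps1_in : c ++ b :: u \in ps by rewrite -E1 mem_nth.
have ps_in : c ++ b' :: u' \in ps by rewrite -E2 mem_nth // ltnW.
have lt1 : nth [::] ps s.+1 <lex nth [::] ps s by apply: nth_ps_ltn; rewrite ltnSn.
have b'0 : 0 < b' by lia.
exists (W ++ block c b'); split=> [||w|w].
- rewrite cat_uniq Wuniq block_uniq andbT /=; apply/hasPn => w wb.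
  apply/negP => /Wcharge[c1 [b1 [wc1 b10 c1s]]].
  have [c1E b1E] := block_inj b10 b'0 wc1 wb.
  subst c1 b1; case: c1s => [/eqP|]; first by rewrite (negPf c0).
  by rewrite E2 ltNge lexi_prefix // prefix_rcons_cat.
- by rewrite size_cat Wsize size_map size_iota mulSn addnC.
- rewrite mem_cat => /orP[/Wcand[wc ps_w]|wb]; first by split=> //; apply: lt_trans ps_w.
  split; first exact: block_cand ps_in b'0 wb.
  by rewrite E1; apply: block_gt wb; apply: ltn_trans bb' (ps_letter_lt ps_in).
- rewrite mem_cat => /orP[/Wcharge[c1 [b1 [wc1 b10 c1s]]]|wb].
    exists c1, b1; split=> //; case: c1s => [|ps_c1]; [left|right] => //.
    exact: lt_trans ps_c1.
  by exists c, b'; split=> //; right; rewrite E1 -cats1; apply: ltxi_cat.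
Qed.

Lemma ex_succ_list : exists L, succ_list m n k ps L /\ size L = size ps * k.
Proof.
suff: forall t, t <= size ps * k -> exists L, succ_list m n k ps L /\ size L = t.
  by move/(_ _ (leqnn _)).
elim=> [|t IH] t_lt; first by exists [::]; split=> //; split=> // t; rewrite ltn0.
have [L [[_ Lmin] Lsize]] := IH (ltnW t_lt).
have t_ps : t %/ k < size ps by rewrite ltn_divLR.
have [W [Wuniq Wsize Wcand _]] := enough_cands t_ps.
have [w wW wL] : exists2 w, w \in W & w \notin L.
  apply/hasP; rewrite -(negbK (has _ _)) -all_predC; apply/negP => /allP WL.
  have : size W <= size L by apply: uniq_leq_size => // w /WL /negPn.
  by rewrite Wsize Lsize leqNgt ltn_ceil.
have [w0 w0min] : exists w0, is_dict_min (succ_cands m n k ps L t) w0.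
  apply: (@ex_dict_min _ (cands_seq n ps)) => [v [/cands_seqP]//|].
  exists w; have [wc ps_w] := Wcand w wW.
  by split=> //; split; [apply/dict_ltP|rewrite -Lsize take_size; apply/negP].
exists (rcons L w0); split; last by rewrite size_rcons Lsize.
split=> [|t']; first by rewrite size_rcons Lsize.
rewrite size_rcons Lsize ltnS leq_eqVlt => /predU1P[->|t'L].
  rewrite -cats1 take_size_cat // nth_cat Lsize ltnn subnn /=.
  by move: w0min; rewrite /succ_cands -Lsize take_size Lsize.
by rewrite -cats1 take_cat nth_cat Lsize t'L; apply: Lmin; rewrite Lsize.
Qed.

Section RefinedSuccessors.
Variable i0 : nat.
Hypothesis i0_ps : i0 < size ps.
Local Notation pi := (nth [::] ps i0).
Local Notation Ptilde := (ptilde i0).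

Variable L : seq word.
Hypothesis L_succ : succ_list m n k ps L.
Hypothesis L_size : size L = size ps * k.

Local Notation K := (i0 * k).

Definition new_succs : seq word := [seq rcons pi (m + u) | u <- iota 0 ((m - 1) * k)].

Definition succ_tilde : seq word := take K L ++ new_succs ++ take k (drop K L).

Lemma K_k_L : K + k <= size L.
Proof. by rewrite L_size addnC -mulSn leq_mul2r i0_ps orbT. Qed.

Lemma size_take_K : size (take K L) = K.
Proof. by rewrite size_takel // (leq_trans (leq_addr k K) K_k_L). Qed.

Lemma size_succ_tilde : size succ_tilde = K + (m - 1) * k + k.
Proof.
rewrite !size_cat size_take_K size_map size_iota size_takel ?addnA //.
by rewrite size_drop leq_subRL ?K_k_L // (leq_trans (leq_addr k K) K_k_L).
Qed.

Lemma nth_succ_tilde_mid u : u < (m - 1) * k -> nth [::] succ_tilde (K + u) = rcons pi (m + u).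
Proof.
move=> u_lt; rewrite nth_cat size_take_K ltnNge leq_addr /= addKn nth_cat size_map size_iota u_lt.
by rewrite (nth_map 0) ?size_iota // nth_iota.
Qed.

Lemma nth_succ_tilde_hi r :
  r < k -> nth [::] succ_tilde (K + (m - 1) * k + r) = nth [::] L (K + r).
Proof.
move=> rk; rewrite -addnA nth_cat size_take_K ltnNge leq_addr /= addKn.
by rewrite nth_cat size_map size_iota ltnNge leq_addr /= addKn nth_take // nth_drop.
Qed.

Lemma mem_L_cand w : w \in L -> cand m n ps w.
Proof. by case/(nthP [::]) => t tL <-; case: (L_succ.2 t tL) => -[]. Qed.

Lemma succ_tilde_lo t : t < K ->
  is_dict_min (succ_cands m n k Ptilde succ_tilde t) (nth [::] succ_tilde t).
Proof.
move=> tK; have tL : t < size L by apply: leq_trans K_k_L; apply: ltn_addr.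
have t_i0 : t %/ k < i0 by rewrite ltn_divLR.
have [[w_cand [w_gt w_new]] w_min] := L_succ.2 t tL.
rewrite /succ_cands (nth_ptilde_lo i0_ps) // nth_cat take_cat size_take_K tK nth_take //.
rewrite take_takel ?(ltnW tK) //; split; first by split=> //; apply/(cand_ptilde i0_ps); left.
move=> v [/(cand_ptilde i0_ps)[v_cand|[j [_ ->]]] [v_gt v_new]]; first exact: w_min.
have p_ps : nth [::] ps (t %/ k) \in ps by apply/mem_nth/(ltn_trans t_i0).
have pi_lt : pi <lex nth [::] ps (t %/ k) by apply: nth_ps_ltn; rewrite t_i0 i0_ps.
have npre : ~~ prefix pi (nth [::] ps (t %/ k)).
  by apply/negP => /(ps_prefix_free (pi_ps i0_ps) p_ps) e; rewrite e ltxx in pi_lt.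
by move/dict_ltP: v_gt; rewrite ltNge ltW // -cats1 ltxi_cat_nprefix.
Qed.

Lemma succ_tilde_mid u : u < (m - 1) * k ->
  is_dict_min (succ_cands m n k Ptilde succ_tilde (K + u)) (nth [::] succ_tilde (K + u)).
Proof.
move=> u_lt; have q_lt : u %/ k < m - 1 by rewrite ltn_divLR.
rewrite /succ_cands; have -> : take (K + u) succ_tilde = take K L ++ [seq rcons pi (m + u') | u' <- iota 0 u].
  rewrite take_cat size_take_K ltnNge leq_addr /= addKn take_cat size_map size_iota u_lt.
  by rewrite -map_take take_iota (minn_idPl (ltnW u_lt)).
rewrite divnMDl // (nth_ptilde_mid i0_ps); last lia.
rewrite nth_succ_tilde_mid //; split.
- split; first by apply/(cand_ptilde i0_ps); right; exists (m + u); rewrite n_eq ltn_add2l u_lt leq_addr.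
  split; first by apply/dict_ltP; rewrite -!cats1 ltxi_cat //; move: (u %/ k) => q; lia.
  rewrite mem_cat => /orP[/mem_take/mem_L_cand/cand_nprefix/(_ (pi_ps i0_ps))|/mapP[u' u'_in /rcons_inj[]]].
    by rewrite -cats1 prefix_prefix.
  by move: u'_in; rewrite mem_iota; lia.
- move=> v [/(cand_ptilde i0_ps)[v_cand|[j [jmn ->]]] [/dict_ltP v_gt v_new]]; apply/dict_leP.
    have npre := cand_nprefix v_cand (pi_ps i0_ps).
    by apply: ltW; move: v_gt; rewrite -!cats1 !ltxi_cat_nprefix.
  apply: lexi_rcons; rewrite leqNgt; apply/negP => ju; apply: v_new.
  rewrite mem_cat; apply/orP; right; apply/mapP; exists (j - m).
    by rewrite mem_iota; lia.
  by congr rcons; lia.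
Qed.

Lemma succ_tilde_hi r : r < k ->
  is_dict_min (succ_cands m n k Ptilde succ_tilde (K + (m - 1) * k + r))
              (nth [::] succ_tilde (K + (m - 1) * k + r)).
Proof.
move=> rk; have rL : K + r < size L by apply: leq_trans K_k_L; rewrite ltn_add2l.
have [[w_cand [/dict_ltP w_gt w_new]] w_min] := L_succ.2 _ rL.
rewrite divnMDl // divn_small // addn0 in w_gt w_min.
have npre := cand_nprefix w_cand (pi_ps i0_ps).
rewrite /succ_cands.
have -> : (K + (m - 1) * k + r) %/ k = i0 + (m - 1).
  by rewrite -mulnDl divnMDl // divn_small // addn0.
rewrite (nth_ptilde_mid i0_ps) ?subnn; last lia.
rewrite nth_succ_tilde_hi // -addnA.
have -> : take (K + ((m - 1) * k + r)) succ_tilde = take K L ++ new_succs ++ take r (drop K L).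
  rewrite take_cat size_take_K ltnNge leq_addr /= addKn.
  by rewrite take_cat size_map size_iota ltnNge leq_addr /= addKn take_takel // ltnW.
have mem_taken w : w \in take K L ++ new_succs ++ take r (drop K L) ->
                   w \in take (K + r) L \/ prefix pi w.
  rewrite takeD !mem_cat => /or3P[w_in|/mapP[u _ ->]|w_in]; rewrite ?w_in ?orbT; auto.
  by right; rewrite -cats1 prefix_prefix.
split.
- split; first by apply/(cand_ptilde i0_ps); left.
  split; first by apply/dict_ltP; rewrite -cats1 ltxi_cat_nprefix.
  by case/mem_taken => //; apply/negP.
- move=> v [/(cand_ptilde i0_ps)[v_cand|[j [jmn ->]]] [/dict_ltP v_gt v_new]].
    apply: w_min; split=> //; split.
      by apply/dict_ltP; apply: le_lt_trans v_gt; rewrite lexi_prefix // prefix_rcons.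
    by rewrite takeD !mem_cat => /orP[] v_in; apply: v_new; rewrite !mem_cat v_in ?orbT.
  exfalso; apply: v_new; rewrite !mem_cat; apply/orP; right; apply/orP; left.
  apply/mapP; exists (j - m); last by congr rcons; lia.
  by rewrite mem_iota; move: jmn; rewrite n_eq; lia.
Qed.

Lemma succ_list_tilde : succ_list m n k Ptilde succ_tilde.
Proof.
split.
  rewrite size_succ_tilde (size_ptilde i0_ps) -addnBA; last exact: ltnW.
  by rewrite mulnDl addnAC leq_add2r -L_size K_k_L.
move=> t; rewrite size_succ_tilde => t_lt.
have [tK|Kt] := ltnP t K; first exact: succ_tilde_lo.
have [tM|Mt] := ltnP t (K + (m - 1) * k).
  by rewrite -(subnKC Kt); apply: succ_tilde_mid; rewrite -(ltn_add2l K) subnKC.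
by rewrite -(subnKC Mt); apply: succ_tilde_hi; rewrite -(ltn_add2l (K + (m - 1) * k)) subnKC.
Qed.

Lemma ex_succ_at r : 0 < r <= k -> exists w, succ_at m n k ps i0 r w.
Proof.
move=> /andP[r0 rk]; exists (nth [::] L (K + r.-1)), L; split=> //; split=> //.
by apply: leq_trans K_k_L; rewrite ltn_add2l prednK.
Qed.

Lemma succ_at_tilde_new j r : 0 < j < m -> 0 < r <= k ->
  succ_at m n k Ptilde (i0 + (m - 1 - j)) r (rcons pi (m + (m - 1 - j) * k + r - 1)).
Proof.
move=> /andP[j0 jm] /andP[r0 rk].
have u_lt : (m - 1 - j) * k + r.-1 < (m - 1) * k.
  have : (m - 1 - j).+1 * k <= (m - 1) * k by rewrite leq_mul2r; apply/orP; right; lia.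
  by rewrite mulSn; move: ((m - 1 - j) * k) ((m - 1) * k) => a b; lia.
exists succ_tilde; split; first exact: succ_list_tilde.
rewrite mulnDl -addnA size_succ_tilde nth_succ_tilde_mid //; split.
  by move: u_lt; move: ((m - 1 - j) * k) ((m - 1) * k) => a b; lia.
by congr rcons; move: ((m - 1 - j) * k) => a; lia.
Qed.

Lemma succ_at_tilde_old r w : 0 < r <= k -> succ_at m n k ps i0 r w ->
  succ_at m n k Ptilde (i0 + (m - 1)) r w.
Proof.
move=> /andP[r0 rk] w_succ.
have rL : K + r.-1 < size L by apply: leq_trans K_k_L; rewrite ltn_add2l prednK.
rewrite (succ_atE L_succ rL w_succ); exists succ_tilde; split; first exact: succ_list_tilde.
rewrite mulnDl size_succ_tilde nth_succ_tilde_hi ?ltn_add2l ?prednK //.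
Qed.

End RefinedSuccessors.
End Successors.
End SortedPrefixFreeListing.

Lemma code_prefix_free m (ps : seq word) :
  (forall p, p \in ps -> exists w, p = (m - 1) :: w /\ all (fun a => a < m) w) ->
  prefix_code (fun w => ((m - 1) :: w) \in ps) ->
  {in ps &, forall p q, prefix p q -> p = q}.
Proof.
move=> ps_shape code p q p_ps q_ps; have [u [pE _]] := ps_shape p p_ps.
have [v [qE _]] := ps_shape q q_ps.
rewrite pE qE prefix_cons eqxx => /prefixP[w vE]; congr cons.
by apply: code; [rewrite -pE|rewrite -qE|exists w].
Qed.

Theorem mainTheorem5 (m n k l : nat) (ps : seq word) (i : nat) :
  2 <= m -> m <= n -> n - m = k * (m - 1) ->
  0 < l -> l = m %[mod m - 1] ->
  size ps = l -> rev_dict_sorted ps ->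
  (forall p, p \in ps -> exists w, p = (m - 1) :: w /\ all (fun a => a < m) w) ->
  complete_prefix_code m (fun w => ((m - 1) :: w) \in ps) ->
  1 <= i <= l ->
  let p_i := nth [::] ps i.-1 in
  (* the successors (p_i)'_1, ..., (p_i)'_k w.r.t. P are well defined *)
  (forall r, 1 <= r <= k -> exists w, succ_at m n k ps i.-1 r w) /\
  (* for any listing ps' of P~ = (P \ {p_i}) u {p_i a_0, ..., p_i a_{m-1}}
     in reverse dictionary order: *)
  (forall ps' : seq word,
     (forall w, w \in ps' <->
        ((w \in ps /\ w <> p_i) \/ exists j, j < m /\ w = rcons p_i j)) ->
     rev_dict_sorted ps' ->
     (forall j r, 1 <= j <= m - 1 -> 1 <= r <= k ->
        succ_at m n k ps' (index (rcons p_i j) ps') r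
                (rcons p_i (m + (m - 1 - j) * k + r - 1))) /\
     (forall r w, 1 <= r <= k -> succ_at m n k ps i.-1 r w ->
        succ_at m n k ps' (index (rcons p_i 0) ps') r w)).
Proof.
move=> m_gt1 _ nmk _ _ ps_size /rev_dict_sortedP ps_sorted ps_shape [_ [code _]].
move=> /andP[i_gt0 i_l] p_i.
have [->|k_gt0] := posnP k.
  split=> [r /andP[r0 rk]|ps' _ _]; first by move: (leq_trans r0 rk).
  by split=> [j r _ /andP[r0 rk]|r w /andP[r0 rk]]; move: (leq_trans r0 rk).
have ps_free := code_prefix_free ps_shape code.
have i0_ps : i.-1 < size ps by rewrite ps_size prednK.
have [L [L_succ L_size]] := ex_succ_list m_gt1 ps_shape ps_free ps_sorted k_gt0 nmk.
split=> [|ps' ps'_mem /rev_dict_sortedP ps'_sorted]; first exact: (ex_succ_at i0_ps L_succ L_size).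
rewrite (ptildeE ps_free ps_sorted i0_ps ps'_mem ps'_sorted).
split=> [j r /andP[j0 jm] r_rng|r w r_rng w_succ].
  rewrite (index_ptilde m_gt1 ps_free ps_sorted i0_ps); last lia.
  by apply: (succ_at_tilde_new m_gt1 ps_shape ps_free ps_sorted k_gt0 nmk i0_ps L_succ L_size _ r_rng); lia.
rewrite (index_ptilde m_gt1 ps_free ps_sorted i0_ps) ?subn0; last lia.
exact: (succ_at_tilde_old m_gt1 ps_shape ps_free ps_sorted k_gt0 nmk i0_ps L_succ L_size r_rng w_succ).
Qed.
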